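(* Let $n\ge1$, let $K$ be a simplicial complex on $[m]$, and let $c=c_1\times\dots\times c_m$ be a cell of $\mathcal{Z}_K(D^n,S^{n-1})$ with all $c_i\in\{-,+,\bullet\}$, such that $c(+)\ne-\infty$ and $c_i=+$ holds if and only if $i=c(+)$. Let $I=\{c(+)\}\cup\mathrm{supp}(c)$. Then $c\in\mathrm{Crit}(K)$ if and only if $c_I\in\mathrm{Crit}(K_I)$ and $K_I=2^I\setminus\{I\}$.
   Context: Give $D^n$ the regular CW structure with cells $e_-^i,e_+^i$ ($0\le i\le n-1$; $e_\pm^i$ the two open hemispheres of $S^i\subseteq S^{n-1}$, with closure of $e_\pm^{i}$ equal to $e_\pm^i\cup\bigcup_{j<i}(e_-^j\cup e_+^j)$) and top cell $e_\bullet^n$; products of disks get the product cell structure. Write $-,+,\bullet$ for $e_-^0,e_+^{n-1},e_\bullet^n$. A simplicial complex $L$ on a finite totally ordered ground set $V=\{v_1<\dots<v_k\}$ (identified with $[k]$ via $v_j\mapsto j$) is a family of subsets of $V$ closed under subsets. $\mathrm{supp}(c)=\{i:c_i=\bullet\}$; $\mathcal{Z}_L(D^n,S^{n-1})$ is the subcomplex of $(D^n)^k$ of cells $c$ with $\mathrm{supp}(c)\in L$; $G_L$ is the directed graph on these cells with edges $c\to c'$ when $c'$ lies in the closure of $c$ and $\dim c'=\dim c-1$. Let $\mathcal{M}$ consist of $e_-^{i+1}\to e_+^i$ ($0\le i\le n-2$) and $e_\bullet^n\to e_+^{n-1}$. Put $\mathcal{M}_1=\{c\to c'\in G_L:c_1\to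 c_1'\in\mathcal{M}\}$ and for $1\le j\le k-1$, $\mathcal{M}_{j+1}=\{c\to c'\in G_L:$ neither $c$ nor $c'$ lies in an edge of $\mathcal{M}_1\cup\dots\cup\mathcal{M}_j$, and $c_{j+1}\to c'_{j+1}\in\mathcal{M}\}$; $\mathcal{M}_L=\bigcup_j\mathcal{M}_j$. $\mathrm{Crit}(L)$ is the set of cells lying in no edge of $\mathcal{M}_L$. For $I\subseteq[m]$, $K_I=\{\sigma\in K:\sigma\subseteq I\}$ is regarded as a complex on the ordered ground set $I$, and $c_I$ is the product of the $c_i$, $i\in I$, in increasing order of $i$. $2^I$ is the set of all subsets of $I$. $c(+)=\min\{i:c_i=+\}$, or $-\infty$ if no coordinate is $+$. *)

From mathcomp Require Import all_boot all_order.
Set Implicit Arguments. Unset Strict Implicit. Unset Printing Implicit Defensive.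

(* Cells of D^n:  Em i = e_-^i,  Ep i = e_+^i  (valid for i <= n-1),  Eb = e_bullet^n. *)
Inductive dcell : Type := Em of nat | Ep of nat | Eb.

Definition dvalid (n : nat) (a : dcell) : Prop :=
  match a with Em i => i < n | Ep i => i < n | Eb => True end.

Definition ddim (n : nat) (a : dcell) : nat :=
  match a with Em i => i | Ep i => i | Eb => n end.

Definition dclosure (b a : dcell) : Prop :=
  match a with
  | Em i => b = Em i \/ exists j, j < i /\ (b = Em j \/ b = Ep j)
  | Ep i => b = Ep i \/ exists j, j < i /\ (b = Em j \/ b = Ep j)
  | Eb => True
  end.

Definition is_top (a : dcell) : bool := if a is Eb then true else false.

Definition Mpair (n : nat) (a b : dcell) : Prop :=
  (exists i, i <= n - 2 /\ 0 < n.-1 /\ a = Em i.+1 /\ b = Ep i)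
  \/ (a = Eb /\ b = Ep n.-1).

Section Cells.
Variable k : nat.
Definition pcell := 'I_k -> dcell.

Definition supp (c : pcell) : {set 'I_k} := [set i | is_top (c i)].

Definition is_complex (L : {set {set 'I_k}}) : Prop :=
  forall s t : {set 'I_k}, t \subset s -> s \in L -> t \in L.

Definition cellZ (n : nat) (L : {set {set 'I_k}}) (c : pcell) : Prop :=
  (forall i, dvalid n (c i)) /\ supp c \in L.

Definition pdim (n : nat) (c : pcell) : nat := \sum_(i < k) ddim n (c i).

Definition edgeG (n : nat) (L : {set {set 'I_k}}) (c c' : pcell) : Prop :=
  cellZ n L c /\ cellZ n L c' /\ (forall i, dclosure (c' i) (c i))
  /\ pdim n c' + 1 = pdim n c.

(* edges of G_L whose j-th coordinate (0-based) is an edge of M *)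
Definition Mbase (n : nat) (L : {set {set 'I_k}}) (j : nat) (c c' : pcell) : Prop :=
  edgeG n L c c' /\ exists Hj : j < k, Mpair n (c (Ordinal Hj)) (c' (Ordinal Hj)).

Definition touches (R : pcell -> pcell -> Prop) (c : pcell) : Prop :=
  exists d, R c d \/ R d c.

(* Mupto n L j = M_1 u ... u M_{j+1}  (paper's 1-based indices) *)
Fixpoint Mupto (n : nat) (L : {set {set 'I_k}}) (j : nat) : pcell -> pcell -> Prop :=
  match j with
  | 0 => Mbase n L 0
  | j'.+1 => fun c c' => Mupto n L j' c c' \/
      (Mbase n L j'.+1 c c' /\ ~ touches (Mupto n L j') c /\ ~ touches (Mupto n L j') c')
  end.

Definition ML (n : nat) (L : {set {set 'I_k}}) : pcell -> pcell -> Prop := Mupto n L k.-1.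

Definition Crit (n : nat) (L : {set {set 'I_k}}) (c : pcell) : Prop :=
  cellZ n L c /\ ~ touches (ML n L) c.
End Cells.

(* Restriction to I \subseteq [m], with ground set I identified with [#|I|]
   order-preservingly via enum_val (enum of a set of ordinals is increasing). *)
Definition Iemb (m : nat) (I : {set 'I_m}) (j : 'I_#|I|) : 'I_m := enum_val j.

Definition restrictK (m : nat) (K : {set {set 'I_m}}) (I : {set 'I_m})
  : {set {set 'I_#|I|}} := [set s : {set 'I_#|I|} | (@Iemb m I) @: s \in K].

Definition restrictc (m : nat) (c : pcell m) (I : {set 'I_m}) : pcell #|I| :=
  fun j => c (@Iemb m I j).
Arguments restrictc [m] c I _.

From mathcomp Require Import all_boot all_order zify.
From Stdlib Require Import FunctionalExtensionality.
Set Implicit Arguments. Unset Strict Implicit. Unset Printing Implicit Defensive.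

(* For a cell with coordinates in {-, +, bullet}, the only matching edges at a
   coordinate q are bullet -> + at q, all other coordinates fixed; a coordinate
   equal to - (= e_-^0) is never matched, so a cell with only - below q is
   untouched by M_1, ..., M_q.  Hence, with p = c(+):
   - a coordinate of supp c below p can be matched with + at the first such
     place, so p must be the least element of I;
   - if I is a face, c is matched with c[p := bullet] at level p;
   - if some facet I - l (l in supp c) is not a face, the least such l gives an
     edge c -> c[l := +] of M_l: every earlier bullet coordinate q of c or of
     c[l := +] is blocked because its would-be partner, having + at p and a
     face as p-extended support, is already matched at level p < q.
   Conversely, if p = min I and K_I is the boundary of the simplex I, this
   blocking argument shows that c is never touched.  Both conditions are
   invariant under restriction to I, which is order-preservingly [#|I|]. *)

Lemma sorted_enum_set m (A : {set 'I_m}) : sorted ltn (map val (enum A)).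
Proof.
have -> : enum A = filter (mem A) (enum 'I_m) by rewrite {1}/enum_mem -enumT.
apply: (subseq_sorted ltn_trans _ (iota_ltn_sorted 0 m)).
by rewrite -val_enum_ord; apply/map_subseq/filter_subseq.
Qed.

Lemma ltn_enum_val m (A : {set 'I_m}) (i j : 'I_#|A|) :
  i < j -> enum_val i < enum_val j.
Proof.
move=> lt_ij; have x0 := enum_val i.
have size_A : size (enum A) = #|A| by rewrite cardE.
rewrite (enum_val_nth x0 i) (enum_val_nth x0 j) -!(nth_map x0 (val x0)) ?size_A //.
by apply: (sorted_ltn_nth ltn_trans _ (sorted_enum_set A)); rewrite ?inE ?size_map ?size_A.
Qed.

Lemma leq_enum_val m (A : {set 'I_m}) (i j : 'I_#|A|) :
  (enum_val i <= enum_val j) = (i <= j).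
Proof.
case: (ltngtP i j) => [lt_ij | lt_ji | eq_ij].
- exact/ltnW/ltn_enum_val.
- by apply/negbTE; rewrite -ltnNge ltn_enum_val.
- by move: eq_ij => /val_inj ->; rewrite !leqnn.
Qed.

Lemma setU1D1 (T : finType) (a b : T) (A : {set T}) :
  a != b -> a |: (A :\ b) = (a |: A) :\ b.
Proof.
by move=> ne_ab; apply/setP => i; rewrite !inE; case: eqVneq => [->|] //=; rewrite ne_ab.
Qed.

Definition update k (x : pcell k) (q : 'I_k) (a : dcell) : pcell k :=
  fun i => if i == q then a else x i.

Section Update.
Variable k : nat.
Implicit Types (x : pcell k) (q : 'I_k).

Lemma update_eq x q a : update x q a q = a.
Proof. by rewrite /update eqxx. Qed.

Lemma update_neq x q a i : i != q -> update x q a i = x i.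
Proof. by rewrite /update => /negbTE ->. Qed.

Lemma update_id x q : update x q (x q) = x.
Proof. by apply: functional_extensionality => i; rewrite /update; case: eqP => [->|]. Qed.

Lemma update_update x q a b : update (update x q a) q b = update x q b.
Proof. by apply: functional_extensionality => i; rewrite /update; case: eqP. Qed.

Lemma supp_update_Eb x q : supp (update x q Eb) = q |: supp x.
Proof. by apply/setP => i; rewrite !inE /update; case: eqP. Qed.

Lemma supp_update_Ep x q a : supp (update x q (Ep a)) = supp x :\ q.
Proof. by apply/setP => i; rewrite !inE /update; case: eqP. Qed.

Lemma cellZ_update n L x q a :
  cellZ n L x -> dvalid n a -> supp (update x q a) \in L -> cellZ n L (update x q a).
Proof. by move=> [valid_x _] valid_a supp_L; split=> // i; rewrite /update; case: eqP. Qed.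

End Update.

Lemma Mpair_Em0_l n b : ~ Mpair n (Em 0) b.
Proof. by case=> [[i [_ [_ [+ _]]]] | [+ _]]. Qed.

Lemma Mpair_Em0_r n a : ~ Mpair n a (Em 0).
Proof. by case=> [[i [_ [_ [_ +]]]] | [_ +]]. Qed.

Lemma Mpair_Ep_l n i b : ~ Mpair n (Ep i) b.
Proof. by case=> [[j [_ [_ [+ _]]]] | [+ _]]. Qed.

Lemma Mpair_Eb_r n a : ~ Mpair n a Eb.
Proof. by case=> [[i [_ [_ [_ +]]]] | [_ +]]. Qed.

Lemma Mpair_Eb_l n b : Mpair n Eb b -> b = Ep n.-1.
Proof. by case=> [[j [_ [_ [+ _]]]] | [_ ->]]. Qed.

Lemma Mpair_Ep_r n a : 1 <= n -> Mpair n a (Ep n.-1) -> a = Eb.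
Proof. by move=> n_gt0; case=> [[j [le_jn [lt0n [_ [eq_j]]]]] | [-> _]] //; lia. Qed.

Lemma Mpair_Eb n : Mpair n Eb (Ep n.-1).
Proof. by right. Qed.

Lemma ddim_Mpair n a b : 1 <= n -> Mpair n a b -> ddim n b + 1 = ddim n a.
Proof. by move=> n_gt0; case=> [[j [_ [_ [-> ->]]]] | [-> ->]] /=; lia. Qed.

Lemma ddim_closure n a b : dclosure b a -> dvalid n b -> ddim n b <= ddim n a.
Proof.
case: a => [i|i|] /=; last by case: b => //= j _ /ltnW.
all: by case=> [->|[j [lt_ji [->|->]]]] //= _; apply: ltnW.
Qed.

Lemma closure_ddim_eq n a b :
  dclosure b a -> dvalid n b -> ddim n b = ddim n a -> b = a.
Proof.
case: a => [i|i|] /=; last by case: b => //= j _ lt_jn eq_jn; rewrite eq_jn ltnn in lt_jn.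
all: by case=> [->|[j [lt_ji [->|->]]]] //= _ eq_ji; rewrite eq_ji ltnn in lt_ji.
Qed.

Lemma dclosure_refl a : dclosure a a.
Proof. by case: a => [i|i|] //=; left. Qed.

Lemma leq_sum_eq (I : finType) (P : pred I) (E1 E2 : I -> nat) :
  (forall i, P i -> E1 i <= E2 i) -> \sum_(i | P i) E1 i = \sum_(i | P i) E2 i ->
  forall i, P i -> E1 i = E2 i.
Proof.
move=> le_E12 eq_sum i Pi; apply/eqP; rewrite eqn_leq le_E12 //= -subn_eq0.
have := sumnB (index_enum I) le_E12; rewrite eq_sum subnn => /eqP.
by rewrite sum_nat_eq0 => /forall_inP; apply.
Qed.

Definition minus_below k (x : pcell k) (q : nat) := forall i : 'I_k, i < q -> x i = Em 0.

Lemma minus_below_update k (x : pcell k) (q : nat) (r : 'I_k) a :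
  minus_below x q -> q <= r -> minus_below (update x r a) q.
Proof.
move=> low_x le_qr i lt_iq; rewrite update_neq ?low_x //.
by apply: contraTneq lt_iq => ->; rewrite -leqNgt.
Qed.

Section Matching.
Variables (k n : nat) (L : {set {set 'I_k}}).
Hypotheses (n_gt0 : 1 <= n) (L_complex : is_complex L).
Implicit Types (x y : pcell k).

Lemma edge_Mpair_eq x y q : edgeG n L x y -> Mpair n (x q) (y q) ->
  forall i, i != q -> x i = y i.
Proof.
move=> [[valid_x _] [[valid_y _] [closure_xy dim_xy]]] Mxy.
have le_dim i : ddim n (y i) <= ddim n (x i) by apply: ddim_closure.
have := ddim_Mpair n_gt0 Mxy; move: dim_xy.
rewrite /pdim (bigD1 q) //= [in RHS](bigD1 q) //=.
set sy := \sum_(i | _) _; set sx := \sum_(i | _) _ => dim_xy dim_q.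
have eq_sum : sy = sx by lia.
move=> i ne_iq; symmetry; apply: closure_ddim_eq => //.
exact: (leq_sum_eq (fun i _ => le_dim i) eq_sum).
Qed.

Lemma edge_partner_Eb x y q : edgeG n L x y -> Mpair n (x q) (y q) ->
  x q = Eb -> y = update x q (Ep n.-1).
Proof.
move=> Exy Mxy xq; apply: functional_extensionality => i.
have [->|ne_iq] := eqVneq i q; last by rewrite update_neq // (edge_Mpair_eq Exy Mxy).
by rewrite update_eq; apply: Mpair_Eb_l; rewrite -xq.
Qed.

Lemma edge_partner_Ep x y q : edgeG n L x y -> Mpair n (x q) (y q) ->
  y q = Ep n.-1 -> x = update y q Eb.
Proof.
move=> Exy Mxy yq; apply: functional_extensionality => i.
have [->|ne_iq] := eqVneq i q; last by rewrite update_neq // (edge_Mpair_eq Exy Mxy).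
by rewrite update_eq; apply: (Mpair_Ep_r n_gt0); rewrite -yq.
Qed.

Lemma edge_update_Ep x q : cellZ n L x -> x q = Eb -> edgeG n L x (update x q (Ep n.-1)).
Proof.
move=> Zx xq.
have Zy : cellZ n L (update x q (Ep n.-1)).
  apply: cellZ_update => //=; first by lia.
  by rewrite supp_update_Ep; apply: (L_complex (subsetDl _ _) Zx.2).
split=> //; split=> //; split.
  by move=> i; rewrite /update; case: eqP => [->|_]; [rewrite xq | apply: dclosure_refl].
rewrite /pdim (bigD1 q) //= [in RHS](bigD1 q) //= update_eq xq /=.
rewrite (eq_bigr (fun i => ddim n (x i))) => [|i ne_iq]; last by rewrite update_neq.
by lia.
Qed.

Lemma Mbase_intro x y q : edgeG n L x y -> Mpair n (x q) (y q) -> Mbase n L q x y.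
Proof.
move=> Exy Mxy; split=> //; exists (ltn_ord q).
by have -> : Ordinal (ltn_ord q) = q by apply: val_inj.
Qed.

Lemma Mupto_monotone j j' x y : j <= j' -> Mupto n L j x y -> Mupto n L j' x y.
Proof.
elim: j' => [|j' IH]; first by rewrite leqn0 => /eqP ->.
by rewrite leq_eqVlt => /predU1P [-> // | /IH M /M]; left.
Qed.

Lemma touches_monotone j j' x :
  j <= j' -> touches (Mupto n L j) x -> touches (Mupto n L j') x.
Proof. by move=> le_jj' [d [M|M]]; exists d; [left|right]; apply: Mupto_monotone M. Qed.

Lemma touches_ML j x : j < k -> touches (Mupto n L j) x -> touches (ML n L) x.
Proof. by move=> lt_jk; apply: touches_monotone; lia. Qed.

Lemma MuptoP j x y : Mupto n L j x y ->
  exists q : 'I_k, [/\ q <= j, edgeG n L x y, Mpair n (x q) (y q) &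
    forall l, q = l.+1 :> nat -> ~ touches (Mupto n L l) x /\ ~ touches (Mupto n L l) y].
Proof.
elim: j => [|j IH] /=.
  by move=> [Exy [lt0k Mxy]]; exists (Ordinal lt0k).
case=> [/IH [q [le_qj Exy Mxy untouched]] | [[Exy [lt_jk Mxy]] untouched]].
  by exists q; split=> //; apply: leqW.
by exists (Ordinal lt_jk); split=> // l [<-].
Qed.

Lemma minus_below_untouched x (q j : nat) :
  j < q -> minus_below x q -> ~ touches (Mupto n L j) x.
Proof.
move=> lt_jq low_x [d [] /MuptoP [r [le_rj _ M _]]];
  have xr : x r = Em 0 by apply: low_x; lia.
- by rewrite xr in M; apply: Mpair_Em0_l M.
- by rewrite xr in M; apply: Mpair_Em0_r M.
Qed.

Lemma Mupto_minus_below x y q : edgeG n L x y -> Mpair n (x q) (y q) ->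
  minus_below x q -> minus_below y q -> Mupto n L q x y.
Proof.
move=> Exy Mxy low_x low_y; have := Mbase_intro Exy Mxy.
move: low_x low_y; case: (nat_of_ord q) => [|l] //= low_x low_y M.
by right; split=> //; split; apply: (minus_below_untouched (q := l.+1)).
Qed.

Lemma Eb_touched x q : cellZ n L x -> x q = Eb -> minus_below x q ->
  touches (Mupto n L q) x.
Proof.
move=> Zx xq low_x; exists (update x q (Ep n.-1)); left.
apply: Mupto_minus_below => //.
- exact: edge_update_Ep.
- by rewrite update_eq xq; apply: Mpair_Eb.
- exact: minus_below_update.
Qed.

Lemma Ep_touched y q : cellZ n L y -> y q = Ep n.-1 -> minus_below y q ->
  q |: supp y \in L -> touches (Mupto n L q) y.
Proof.
move=> Zy yq low_y supp_L; set x := update y q Eb.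
have Zx : cellZ n L x by apply: cellZ_update; rewrite ?supp_update_Eb.
have xq : x q = Eb by rewrite /x update_eq.
have low_x : minus_below x q by apply: minus_below_update.
have <- : update x q (Ep n.-1) = y by rewrite /x update_update -yq update_id.
exists x; right; apply: Mupto_minus_below.
- exact: edge_update_Ep.
- by rewrite update_eq xq; apply: Mpair_Eb.
- exact: low_x.
- exact: minus_below_update.
Qed.

Lemma Mupto_untouched x (p : 'I_k) j : x p = Ep n.-1 -> minus_below x p ->
  (forall q : 'I_k, q <= j -> [\/ x q = Em 0,
     x q = Ep n.-1 /\ q |: supp x \notin L |
     [/\ x q = Eb, p < q & p |: (supp x :\ q) \in L]]) ->
  ~ touches (Mupto n L j) x.
Proof.
move=> xp low_x cases [z [] /MuptoP [q [le_qj Exz Mxz untouched]]];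
  case: (cases q le_qj) => [xq | [xq notin_L] | [xq lt_pq p_L]].
- by rewrite xq in Mxz; apply: Mpair_Em0_l Mxz.
- by rewrite xq in Mxz; apply: Mpair_Ep_l Mxz.
- (* the partner of x is itself matched at the earlier level p *)
  have ez := edge_partner_Eb Exz Mxz xq.
  have eq_q : nat_of_ord q = q.-1.+1 by lia.
  have [_] := untouched _ eq_q; apply; apply: (touches_monotone (j := p)); first by lia.
  have ne_pq : p != q by apply: contraTneq lt_pq => ->; rewrite ltnn.
  apply: Ep_touched.
  + exact: Exz.2.1.
  + by rewrite ez update_neq.
  + by rewrite ez; apply/minus_below_update/ltnW.
  + by rewrite ez supp_update_Ep.
- by rewrite xq in Mxz; apply: Mpair_Em0_r Mxz.
- have ez := edge_partner_Ep Exz Mxz xq.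
  by move: Exz => [[_]]; rewrite ez supp_update_Eb (negbTE notin_L).
- by rewrite xq in Mxz; apply: Mpair_Eb_r Mxz.
Qed.

End Matching.

Definition lower_bound k (p : 'I_k) (A : {set 'I_k}) := forall i, i \in A -> p <= i.

Definition boundary k (L : {set {set 'I_k}}) (I : {set 'I_k}) :=
  [set s in L | s \subset I] = [set s : {set 'I_k} | (s \subset I) && (s != I)].

Lemma boundaryP k (L : {set {set 'I_k}}) (I : {set 'I_k}) : is_complex L ->
  boundary L I <-> I \notin L /\ forall l, l \in I -> I :\ l \in L.
Proof.
move=> L_complex; split=> [bd | [notin_I facets]].
  have inE_bd (s : {set 'I_k}) : s \subset I -> (s \in L) = (s != I).
    by move=> sub_sI; have /setP/(_ s) := bd; rewrite !inE sub_sI andbT.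
  split; first by rewrite inE_bd ?eqxx.
  move=> l lI; rewrite inE_bd ?subsetDl //.
  by apply: contraTneq lI => {1}<-; rewrite setD11.
apply/setP => s; rewrite !inE andbC.
have [sub_sI|] //= := boolP (s \subset I).
have [->|ne_sI] /= := eqVneq s I; first exact/negbTE.
apply/idP.
have [l lI notin_ls] : exists2 l, l \in I & l \notin s.
  by apply/subsetPn; apply: contra ne_sI => sub_Is; rewrite eqEsubset sub_sI.
apply: (L_complex (I :\ l) s _ (facets l lI)); apply/subsetP => i i_s.
by rewrite in_setD1 (subsetP sub_sI) // andbT; apply: contraNneq notin_ls => <-.
Qed.

Section CriticalCells.
Variables (k n : nat) (L : {set {set 'I_k}}) (c : pcell k) (p : 'I_k).
Hypotheses (n_gt0 : 1 <= n) (L_complex : is_complex L) (Zc : cellZ n L c)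
  (c_tri : forall i, c i = Em 0 \/ c i = Ep n.-1 \/ c i = Eb)
  (c_plus : forall i, c i = Ep n.-1 <-> i = p).

Local Notation S := (supp c).
Local Notation I := (p |: supp c).

Lemma c_p : c p = Ep n.-1.
Proof. exact/c_plus. Qed.

Lemma c_Eb i : i \in S -> c i = Eb.
Proof. by rewrite inE; case: (c i). Qed.

Lemma supp_c i : c i = Eb -> i \in S.
Proof. by rewrite inE => ->. Qed.

Lemma supp_c_neq i : i \in S -> i != p.
Proof. by move=> /c_Eb ci; apply/eqP => eq_ip; rewrite eq_ip c_p in ci. Qed.

Lemma minus_below_c (q : 'I_k) : lower_bound q I -> minus_below c q.
Proof.
move=> lb i lt_iq; have [// | ci] : c i = Em 0 \/ i \in I.
  case: (c_tri i) => [| [/c_plus -> | /supp_c iS]]; [left | right..] => //.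
    exact: setU11.
  exact: setU1r.
by have := lb i ci; rewrite leqNgt lt_iq.
Qed.

Lemma lower_bound_supp i : lower_bound p I -> i \in S -> p < i.
Proof. by move=> lb iS; rewrite ltn_neqAle lb ?setU1r // andbT val_eqE eq_sym supp_c_neq. Qed.

Lemma c_untouched j : lower_bound p I -> I \notin L ->
  (forall l, l \in S -> l <= j -> I :\ l \in L) -> ~ touches (Mupto n L j) c.
Proof.
move=> lb notin_I facets; apply: (Mupto_untouched n_gt0 L_complex c_p (minus_below_c lb)).
move=> q le_qj; case: (c_tri q) => [cq | [cq | cq]]; first exact: Or31.
  by apply: Or32; move/c_plus: (cq) => ->; rewrite c_p.
have qS := supp_c cq; apply: Or33; split=> //; first exact: lower_bound_supp.
by rewrite setU1D1 ?facets // eq_sym supp_c_neq.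
Qed.

Lemma update_untouched (u : 'I_k) : lower_bound p I -> u \in S -> I :\ u \notin L ->
  (forall i, i \in S -> i < u -> I :\ i \in L) ->
  ~ touches (Mupto n L u.-1) (update c u (Ep n.-1)).
Proof.
move=> lb uS notin_u facets; have ne_pu : p != u by rewrite eq_sym supp_c_neq.
apply: (Mupto_untouched n_gt0 L_complex (p := p)).
- by rewrite update_neq ?c_p.
- by apply: minus_below_update (minus_below_c lb) _; apply/ltnW/lower_bound_supp.
move=> q le_qu; have lt_qu : q < u by have := lower_bound_supp lb uS; lia.
have ne_qu : q != u by apply: contraTneq lt_qu => ->; rewrite ltnn.
rewrite update_neq //; case: (c_tri q) => [cq | [cq | cq]]; first exact: Or31.
  apply: Or32; move/c_plus: (cq) => ->.
  by rewrite c_p supp_update_Ep setU1D1.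
have qS := supp_c cq; apply: Or33; split=> //; first exact: lower_bound_supp.
apply: (L_complex _ (facets q qS lt_qu)).
rewrite supp_update_Ep -setU1D1; last by rewrite eq_sym supp_c_neq.
exact/setUS/setSD/subsetDl.
Qed.

Lemma crit_lower_bound : Crit n L c -> lower_bound p I.
Proof.
move=> [_ untouched].
have [u uI u_min] := @arg_minnP _ p (mem I) val (setU11 p S).
have [eq_up | ne_up] := eqVneq u p; first by move: u_min; rewrite eq_up => u_min i /u_min.
have uS : u \in S by case/setU1P: uI ne_up => [->|//]; rewrite eqxx.
case: untouched; apply: (touches_ML n_gt0 (ltn_ord u)).
by apply: Eb_touched => //; [exact: c_Eb | exact: minus_below_c].
Qed.

Lemma crit_notin : Crit n L c -> lower_bound p I -> I \notin L.
Proof.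
move=> [_ untouched] lb; apply/negP => IL; case: untouched.
apply: (touches_ML n_gt0 (ltn_ord p)); apply: Ep_touched => //.
  exact: c_p.
exact: minus_below_c.
Qed.

Lemma crit_facets : Crit n L c -> lower_bound p I -> forall l, l \in S -> I :\ l \in L.
Proof.
move=> Crit_c lb; have notin_I := crit_notin Crit_c lb; case: Crit_c => _ untouched.
move=> l lS; apply/negPn/negP => notin_l.
have [u /andP [uS notin_u] u_min] :=
  @arg_minnP _ l [pred i | (i \in S) && (I :\ i \notin L)] val (introT andP (conj lS notin_l)).
have facets i : i \in S -> i < u -> I :\ i \in L.
  move=> iS lt_iu; apply/negPn/negP => notin_i.
  by have := u_min i; rewrite /= iS notin_i leqNgt lt_iu => /(_ isT).
have eq_u : nat_of_ord u = u.-1.+1 by have := lower_bound_supp lb uS; lia.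
case: untouched; apply: (touches_ML n_gt0 (ltn_ord u)).
exists (update c u (Ep n.-1)); left; rewrite eq_u; right; split; last split.
- rewrite -eq_u; apply: Mbase_intro; first exact: edge_update_Ep (c_Eb uS).
  by rewrite update_eq c_Eb //; apply: Mpair_Eb.
- by apply: c_untouched => // i iS le_iu; apply: facets; rewrite // eq_u ltnS.
- exact: update_untouched.
Qed.

Lemma critP : Crit n L c <-> lower_bound p I /\ boundary L I.
Proof.
rewrite boundaryP //; split=> [Crit_c | [lb [notin_I facets]]].
  have lb := crit_lower_bound Crit_c; do 2!split => //; first exact: crit_notin.
  move=> l /setU1P [-> | lS]; last exact: crit_facets.
  by rewrite setU1K ?Zc.2 //; apply/negP => /supp_c_neq/eqP.
split=> //; apply: (c_untouched (j := k.-1)) => // l lS _.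
exact/facets/setU1r.
Qed.

End CriticalCells.

Section Restriction.
Variables (m : nat) (I : {set 'I_m}).
Local Notation emb := (@Iemb m I).

Lemma restrictK_complex K : is_complex K -> is_complex (restrictK K I).
Proof. by move=> K_complex s t sub_ts; rewrite !inE; apply/K_complex/imsetS. Qed.

Lemma Iemb_setT : emb @: setT = I.
Proof.
apply/setP => x; apply/imsetP/idP => [[j _ ->] | xI]; first exact: enum_valP.
by exists (enum_rank_in xI x); rewrite /Iemb ?enum_rankK_in.
Qed.

Lemma Iemb_preimset (A : {set 'I_m}) : emb @: [set j | emb j \in A] = A :&: I.
Proof.
apply/setP => x; rewrite inE; apply/imsetP/andP => [[j] | [xA xI]].
  by rewrite inE => jA ->; split=> //; apply: enum_valP.
by exists (enum_rank_in xI x); rewrite ?inE /Iemb enum_rankK_in.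
Qed.

Lemma cellZ_restrict n K (c : pcell m) :
  supp c \subset I -> cellZ n K c -> cellZ n (restrictK K I) (restrictc c I).
Proof.
move=> sub_cI [valid_c supp_K]; split=> [j | ]; first exact: valid_c.
have -> : supp (restrictc c I) = [set j | emb j \in supp c].
  by apply/setP => j; rewrite !inE.
by rewrite inE Iemb_preimset (setIidPl sub_cI).
Qed.

Lemma lower_bound_restrict (p : 'I_#|I|) :
  lower_bound (emb p) I <-> lower_bound p setT.
Proof.
split=> lb i iI; first by rewrite -leq_enum_val; apply/lb/enum_valP.
by rewrite -(enum_rankK_in iI iI) /Iemb leq_enum_val lb.
Qed.

Lemma boundary_restrict K : boundary K I -> boundary (restrictK K I) setT.
Proof.
move=> bd; apply/setP => s; rewrite !inE subsetT /=.
have sub_sI : emb @: s \subset I.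
  by apply/subsetP => _ /imsetP [j _ ->]; apply: enum_valP.
have /setP/(_ (emb @: s)) := bd; rewrite !inE sub_sI andbT /= => ->.
by rewrite -[X in _ != X]Iemb_setT (inj_eq (imset_inj (@enum_val_inj _ _))).
Qed.

End Restriction.

Lemma restrictc_plus n m (c : pcell m) (p : 'I_m) :
  (forall i, c i = Ep n.-1 <-> i = p) ->
  exists p' : 'I_#|p |: supp c|, [/\ Iemb p' = p,
    forall j, restrictc c (p |: supp c) j = Ep n.-1 <-> j = p' &
    p' |: supp (restrictc c (p |: supp c)) = setT].
Proof.
move=> c_plus; have pI := setU11 p (supp c).
exists (enum_rank_in pI p); have emb_p : Iemb (enum_rank_in pI p) = p.
  exact: enum_rankK_in.
have plus_p' j : restrictc c (p |: supp c) j = Ep n.-1 <-> j = enum_rank_in pI p.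
  rewrite /restrictc c_plus; split=> [emb_j | ->] //.
  by apply: enum_val_inj; rewrite /Iemb in emb_j emb_p; rewrite emb_j emb_p.
split=> //; apply/setP => j; rewrite !inE.
have /setU1P [emb_j | jS] := enum_valP j.
  by rewrite (plus_p' j).1 ?eqxx //; apply/c_plus.
by rewrite inE in jS; rewrite /restrictc /Iemb jS orbT.
Qed.

Theorem lemma3p7 (n m : nat) (K : {set {set 'I_m}}) (c : pcell m) (p : 'I_m) :
  1 <= n ->
  is_complex K ->
  cellZ n K c ->
  (forall i, c i = Em 0 \/ c i = Ep n.-1 \/ c i = Eb) ->
  (forall i, c i = Ep n.-1 <-> i = p) ->
  let I := p |: supp c in
  Crit n K c <->
  (Crit n (restrictK K I) (restrictc c I) /\
   [set s in K | s \subset I] = [set s : {set 'I_m} | (s \subset I) && (s != I)]).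
Proof.
move=> n_gt0 K_complex Zc c_tri c_plus I; rewrite {}/I.
have [p' [emb_p' plus_p' cover_p']] := restrictc_plus c_plus.
have Zc' := cellZ_restrict (subsetUr [set p] (supp c)) Zc.
have lb_p' := lower_bound_restrict p'; rewrite emb_p' in lb_p'.
rewrite (critP n_gt0 K_complex Zc c_tri c_plus).
rewrite (critP n_gt0 (restrictK_complex K_complex) Zc' (fun j => c_tri _) plus_p').
rewrite cover_p' -lb_p'.
split=> [[lb bd] | [[lb _] bd]]; do !split=> //; exact: boundary_restrict.
Qed.
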